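(* For every integer $\mathfrak{q}>2$ and every $\mathfrak{p}\in\{1,2,\dots,\mathfrak{q}-1\}$ coprime with $\mathfrak{q}$, there exists a unique $\mathfrak{q}$-periodic sequence $\mathbf{s}\in\{\mathbf A,\mathbf B\}^{\mathbb{Z}}$ such that: $\mathbf{s}[0]=\mathbf A$ and $\mathbf{s}[-1]=\mathbf B$; for every $j\in\mathbb{Z}$ with $(j\bmod\mathfrak{q})\notin\{-\mathfrak{p}\bmod\mathfrak{q},\,-\mathfrak{p}-1\bmod\mathfrak{q}\}$ we have $\mathbf{s}[j+\mathfrak{p}]=\mathbf{s}[j]$; and $\mathbf{s}[-\mathfrak{p}-1]=\mathbf A$, $\mathbf{s}[-\mathfrak{p}]=\mathbf B$.
   Context: $\mathbf A,\mathbf B$ are two symbols; for a sequence $\mathbf{s}=(a_i)_{i\in\mathbb{Z}}$, $\mathbf{s}[i]$ denotes $a_i$. *)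

From Stdlib Require Import ZArith.
Open Scope Z_scope.

Inductive AB : Type := A | B.

Definition periodic (q : Z) (s : Z -> AB) : Prop :=
  forall j : Z, s (j + q) = s j.

Definition lemmaB2_prop (q p : Z) (s : Z -> AB) : Prop :=
  periodic q s /\
  s 0 = A /\ s (-1) = B /\
  (forall j : Z,
      j mod q <> (- p) mod q ->
      j mod q <> (- p - 1) mod q ->
      s (j + p) = s j) /\
  s (- p - 1) = A /\ s (- p) = B.

From Stdlib Require Import ZArith Lia.
Open Scope Z_scope.

(* Since p is invertible modulo q, with inverse u, the orbit 0, p, 2p, ..., (q-1)p
   runs through every residue class once, and the class of j sits at position
   j u mod q.  The shift rule s[j + p] = s[j] carries the value of s from each
   position of the orbit to the next one, except at the steps -p-1 -> -1 and
   -p -> 0.  Hence any admissible s is determined by s[0] = A and s[-1] = B: it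
   equals A on the positions before that of -1 and B from there on, and this
   sequence indeed satisfies all the conditions. *)

Lemma periodic_shift (q : Z) (s : Z -> AB) :
  periodic q s -> forall c j, s (j + c * q) = s j.
Proof.
  intros Hper c; induction c using Z.peano_ind; intros j.
  - f_equal; lia.
  - rewrite <- (IHc j), <- (Hper (j + c * q)); f_equal; lia.
  - rewrite <- (IHc j), <- (Hper (j + Z.pred c * q)); f_equal; lia.
Qed.

Lemma periodic_mod (q : Z) (s : Z -> AB) :
  0 < q -> periodic q s -> forall a b, a mod q = b mod q -> s a = s b.
Proof.
  intros Hq Hper a b Hab.
  rewrite (Z.div_mod a q), (Z.div_mod b q), Hab by lia.
  rewrite Z.add_comm, (Z.add_comm (q * (b / q))), !(Z.mul_comm q).
  now rewrite !periodic_shift.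
Qed.

Lemma mod_pred_neq (q a : Z) : 1 < q -> (a - 1) mod q <> a mod q.
Proof.
  intros Hq Heq.
  pose proof (Z.div_mod a q ltac:(lia)).
  pose proof (Z.div_mod (a - 1) q ltac:(lia)).
  assert (Hone : q * (a / q - (a - 1) / q) = 1) by lia.
  destruct (Z_le_gt_dec (a / q - (a - 1) / q) 0); nia.
Qed.

Section Orbit.

Variables q p u : Z.
Hypothesis q_gt1 : 1 < q.
Hypothesis up_mod : (u * p) mod q = 1.

Definition orbit_index (j : Z) : Z := (j * u) mod q.

Lemma orbit_index_range j : 0 <= orbit_index j < q.
Proof. apply Z.mod_pos_bound; lia. Qed.

Lemma orbit_index_mul_p n : 0 <= n < q -> orbit_index (n * p) = n.
Proof.
  intros Hn; unfold orbit_index.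
  rewrite <- Z.mul_assoc, (Z.mul_comm p), <- Z.mul_mod_idemp_r, up_mod by lia.
  rewrite Z.mul_1_r; apply Z.mod_small; lia.
Qed.

Lemma orbit_index_mod j : (orbit_index j * p) mod q = j mod q.
Proof.
  unfold orbit_index.
  rewrite Z.mul_mod_idemp_l, <- Z.mul_assoc, <- Z.mul_mod_idemp_r, up_mod by lia.
  now rewrite Z.mul_1_r.
Qed.

Lemma orbit_index_inj j j' : orbit_index j = orbit_index j' <-> j mod q = j' mod q.
Proof.
  split; intros H.
  - now rewrite <- orbit_index_mod, H, orbit_index_mod.
  - unfold orbit_index; now rewrite <- Z.mul_mod_idemp_l, H, Z.mul_mod_idemp_l by lia.
Qed.

Lemma orbit_index_add_p j :
  orbit_index j <> q - 1 -> orbit_index (j + p) = orbit_index j + 1.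
Proof.
  intros Hj; pose proof (orbit_index_range j).
  unfold orbit_index in *.
  rewrite Z.mul_add_distr_r, Z.add_mod, (Z.mul_comm p), up_mod by lia.
  apply Z.mod_small; lia.
Qed.

Lemma orbit_index_opp_p : orbit_index (- p) = q - 1.
Proof.
  rewrite <- (orbit_index_mul_p (q - 1)) by lia.
  apply orbit_index_inj.
  replace ((q - 1) * p) with (- p + p * q) by ring.
  now rewrite Z.mod_add by lia.
Qed.

Lemma orbit_index_opp_p_pred : orbit_index (- p - 1) + 1 = orbit_index (- 1).
Proof.
  rewrite <- orbit_index_add_p.
  - f_equal; ring.
  - rewrite <- orbit_index_opp_p, orbit_index_inj.
    apply mod_pred_neq; lia.
Qed.

Definition orbit_seq (j : Z) : AB :=
  if orbit_index j <? orbit_index (- 1) then A else B.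

Lemma orbit_seq_spec : lemmaB2_prop q p orbit_seq.
Proof.
  pose proof orbit_index_opp_p as Hp.
  pose proof orbit_index_opp_p_pred as Hp1.
  pose proof (orbit_index_range (- p - 1)).
  pose proof (orbit_index_range (- 1)).
  unfold orbit_seq.
  split; [| split; [| split; [| split; [| split]]]].
  - intros j.
    assert (Hj : orbit_index (j + q) = orbit_index j).
    { apply orbit_index_inj.
      rewrite <- (Z.mul_1_l q) at 1; apply Z.mod_add; lia. }
    now rewrite Hj.
  - replace (orbit_index 0) with 0 by reflexivity.
    destruct (Z.ltb_spec 0 (orbit_index (-1))); [easy | lia].
  - now rewrite Z.ltb_irrefl.
  - intros j Hjp Hjp1.
    rewrite <- orbit_index_inj, Hp in Hjp.
    rewrite <- orbit_index_inj in Hjp1.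
    rewrite orbit_index_add_p by exact Hjp.
    destruct (Z.ltb_spec (orbit_index j + 1) (orbit_index (-1)));
      destruct (Z.ltb_spec (orbit_index j) (orbit_index (-1))); easy || lia.
  - destruct (Z.ltb_spec (orbit_index (- p - 1)) (orbit_index (-1))); [easy | lia].
  - rewrite Hp; destruct (Z.ltb_spec (q - 1) (orbit_index (-1))); [lia | easy].
Qed.

Lemma lemmaB2_prop_unique (s t : Z -> AB) :
  lemmaB2_prop q p s -> lemmaB2_prop q p t -> forall j, s j = t j.
Proof.
  intros (Hs_per & Hs0 & Hs1 & Hs_step & _) (Ht_per & Ht0 & Ht1 & Ht_step & _).
  assert (Horbit : forall n, 0 <= n -> n < q -> s (n * p) = t (n * p)).
  { intros n Hn; pattern n; apply natlike_ind; [| | exact Hn].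
    - now rewrite Z.mul_0_l, Hs0, Ht0.
    - intros m Hm IHm Hmq.
      replace (Z.succ m * p) with (m * p + p) by ring.
      destruct (Z.eq_dec ((m * p) mod q) ((- p - 1) mod q)) as [Hexc | Hexc].
      + assert (Hlast : (m * p + p) mod q = (-1) mod q).
        { rewrite <- orbit_index_inj, orbit_index_add_p, <- orbit_index_opp_p_pred.
          - now apply orbit_index_inj in Hexc; rewrite Hexc.
          - rewrite orbit_index_mul_p; lia. }
        rewrite (periodic_mod q s ltac:(lia) Hs_per _ _ Hlast).
        rewrite (periodic_mod q t ltac:(lia) Ht_per _ _ Hlast).
        now rewrite Hs1, Ht1.
      + assert (Hnot_last : (m * p) mod q <> (- p) mod q).
        { rewrite <- orbit_index_inj, orbit_index_opp_p, orbit_index_mul_p; lia. }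
        rewrite Hs_step, Ht_step by assumption.
        apply IHm; lia. }
  intros j; pose proof (orbit_index_range j).
  rewrite (periodic_mod q s ltac:(lia) Hs_per j (orbit_index j * p)),
          (periodic_mod q t ltac:(lia) Ht_per j (orbit_index j * p))
    by now rewrite orbit_index_mod.
  apply Horbit; lia.
Qed.

End Orbit.

Theorem lemmaB2 (q p : Z) (hq : 2 < q) (hp1 : 1 <= p) (hp2 : p <= q - 1)
  (hcop : Z.gcd p q = 1) :
  exists s : Z -> AB, lemmaB2_prop q p s /\
    forall t : Z -> AB, lemmaB2_prop q p t -> forall j : Z, t j = s j.
Proof.
  destruct (Z.gcd_bezout p q 1 hcop) as [u [v Hbezout]].
  assert (Hu : (u * p) mod q = 1).
  { replace (u * p) with (1 + (- v) * q) by lia.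
    rewrite Z.mod_add by lia; apply Z.mod_small; lia. }
  assert (Hq : 1 < q) by lia.
  exists (orbit_seq q u); split.
  - now apply orbit_seq_spec.
  - intros t Ht; apply (lemmaB2_prop_unique q p u); auto using orbit_seq_spec.
Qed.
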